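(* Let $z$ be a perfect element of $D^{2,2,2}$, let $i\neq j$ in $\{1,2,3\}$, and let $u\in D^{2,2,2}$. Suppose that for every indecomposable representation $\rho$, $$\varphi_i(\Phi^+\rho(z))+\varphi_j(\Phi^+\rho(z))=\rho(u).$$ Then $u$ is perfect.
   Context: $D^{2,2,2}$ is the modular lattice generated by $x_1,y_1,x_2,y_2,x_3,y_3$ subject only to $x_i\subseteq y_i$ ($i=1,2,3$), with a greatest element $I$ adjoined. Meet is written $ab$, join $a+b$. A representation $\rho$ of $D^{2,2,2}$ in a finite-dimensional vector space $X_0$ is a lattice morphism from $D^{2,2,2}$ to the subspace lattice of $X_0$, with $\rho(I)=X_0$. Write $X_i=\rho(x_i)\subseteq Y_i=\rho(y_i)$. $\rho$ is indecomposable if $X_0\neq0$ and there is no decomposition $X_0=X'\oplus X''$ with $X',X''\neq0$ and $\rho(a)=(\rho(a)\cap X')+(\rho(a)\cap X'')$ for all $a$. An element $a$ is perfect if $\rho(a)\in\{0,X_0\}$ for every indecomposable $\rho$. Put $R=Y_1\oplus Y_2\oplus Y_3$ and $X^1_0=\{(\eta_1,\eta_2,\eta_3)\in R:\sum\eta_i=0\}$. Let $G'_i\subseteq R$ be the triples with $i$-th coordinate in $X_i$, and $H'_i\subseteq R$ the triples with $i$-th coordinate $0$. $\Phi^+\rho$ is the representation in $X^1_0$ with $\Phi^+\rho(y_i)=G'_i\cap X^1_0$, $\Phi^+\rho(x_i)=H'_i\cap X^1_0$, $\Phi^+\rho(I)=X^1_0$. The elementary map $\varphi_i:X^1_0\to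 X_0$ is $(\eta_1,\eta_2,\eta_3)\mapsto\eta_i$; $\varphi_i(S)$ denotes the image of a subspace $S$. *)

From HB Require Import structures.
From mathcomp Require Import all_boot all_order all_algebra.
Set Implicit Arguments. Unset Strict Implicit. Unset Printing Implicit Defensive.
Import GRing.Theory.
Local Open Scope ring_scope.
Local Open Scope vspace_scope.

(* Lattice terms over the generators x_i, y_i (i : 'I_3, index i stands for
   i+1 in the paper) and the adjoined top I. Every element of D^{2,2,2} is
   represented by such a term; the value of a representation on an element
   does not depend on the chosen representative (subspace lattices are
   modular), so quantifying over terms = quantifying over D^{2,2,2}. *)
Inductive D222 : Type :=
  | Dx of 'I_3
  | Dy of 'I_3
  | DI
  | Dmeet of D222 & D222
  | Djoin of D222 & D222.

Fixpoint evalD (K : fieldType) (V : vectType K) (top : {vspace V})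
    (gx gy : 'I_3 -> {vspace V}) (a : D222) : {vspace V} :=
  match a with
  | Dx i => gx i
  | Dy i => gy i
  | DI => top
  | Dmeet a b => (evalD top gx gy a :&: evalD top gx gy b)%VS
  | Djoin a b => (evalD top gx gy a + evalD top gx gy b)%VS
  end.

(* A representation of D^{2,2,2} in the finite-dimensional space X_0 = V
   (the whole space): subspaces X_i <= Y_i. *)
Record rep (K : fieldType) (V : vectType K) := Rep {
  repX : 'I_3 -> {vspace V};
  repY : 'I_3 -> {vspace V};
  repXY : forall i, (repX i <= repY i)%VS
}.

Definition rho (K : fieldType) (V : vectType K) (r : rep V) (a : D222) :
  {vspace V} := evalD fullv (repX r) (repY r) a.

Definition indecomposable (K : fieldType) (V : vectType K) (r : rep V) : Prop :=
  (fullv != 0 :> {vspace V})%VS /\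
  ~ (exists X1 X2 : {vspace V},
       [/\ X1 != 0%VS, X2 != 0%VS, (X1 :&: X2 = 0)%VS, (X1 + X2 = fullv)%VS &
        forall a : D222, rho r a = (rho r a :&: X1 + rho r a :&: X2)%VS]).

Definition perfect (K : fieldType) (a : D222) : Prop :=
  forall (V : vectType K) (r : rep V), indecomposable r ->
    rho r a = 0%VS \/ rho r a = fullv.

Definition triple (K : fieldType) (V : vectType K) := {ffun 'I_3 -> V}.

Definition coordf (K : fieldType) (V : vectType K) (i : 'I_3) :
  'Hom(triple V, V) := linfun (fun eta : triple V => eta i).

Definition sumf (K : fieldType) (V : vectType K) :
  'Hom(triple V, V) := linfun (fun eta : triple V => (\sum_(k < 3) eta k)%R).

Section PhiPlus.
Variables (K : fieldType) (V : vectType K) (r : rep V).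

(* R = Y_1 (+) Y_2 (+) Y_3, realized as the triples with eta_k in Y_k *)
Definition Rsp : {vspace triple V} :=
  \bigcap_(k < 3) (coordf V k @^-1: repY r k).

Definition X10 : {vspace triple V} := Rsp :&: lker (sumf V).

Definition Gp (i : 'I_3) : {vspace triple V} := Rsp :&: (coordf V i @^-1: repX r i).
Definition Hp (i : 'I_3) : {vspace triple V} := Rsp :&: lker (coordf V i).

Definition PhiPlus (a : D222) : {vspace triple V} :=
  evalD X10 (fun i => Hp i :&: X10) (fun i => Gp i :&: X10) a.

Definition phi (i : 'I_3) (S : {vspace triple V}) : {vspace V} :=
  (coordf V i @: S)%VS.

End PhiPlus.

From HB Require Import structures.
From mathcomp Require Import all_boot all_order all_algebra.
Set Implicit Arguments. Unset Strict Implicit. Unset Printing Implicit Defensive.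
Import GRing.Theory.
Local Open Scope ring_scope.
Local Open Scope vspace_scope.

(* If rho is indecomposable and X^1_0 <> 0, then each Y_k lies in the sum of
   the other two Y's and Y_1 + Y_2 + Y_3 = X_0: otherwise a part of Y_k (or of
   X_k) outside the other Y's, resp. a complement of the sum, would split off
   as a direct summand of rho.  Hence every vector of Y_k is the k-th coordinate
   of a triple in X^1_0, so phi_k maps X^1_0 onto Y_k and Phi^+ rho (y_k) onto
   X_k.  A decomposition X^1_0 = A' (+) B' of Phi^+ rho then pushes forward to
   the decomposition X_0 = sum_k phi_k(A') (+) sum_k phi_k(B') of rho, so
   Phi^+ rho is indecomposable too.  As z is perfect, Phi^+ rho (z) is 0 or
   X^1_0, which phi_i + phi_j sends to 0 or to Y_i + Y_j = X_0. *)

Section Coordinates.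
Variables (K : fieldType) (V : vectType K).

Definition triple_coord k (eta : triple V) : V := eta k.
Fact triple_coord_is_linear k : linear (triple_coord k).
Proof. by move=> a x y; rewrite /triple_coord !ffunE. Qed.
HB.instance Definition _ k :=
  GRing.isLinear.Build K (triple V) V _ (triple_coord k)
  (triple_coord_is_linear k).

Definition triple_sum (eta : triple V) : V := (\sum_(k < 3) eta k)%R.
Fact triple_sum_is_linear : linear triple_sum.
Proof.
move=> a x y; rewrite /triple_sum scaler_sumr -big_split /=.
by apply: eq_bigr => k _; rewrite !ffunE.
Qed.
HB.instance Definition _ := GRing.isLinear.Build K (triple V) V _ triple_sum
  triple_sum_is_linear.

Lemma coordfE k (eta : triple V) : coordf V k eta = eta k.
Proof. exact: (lfunE (triple_coord k)). Qed.

Lemma sumfE (eta : triple V) : sumf V eta = (\sum_(k < 3) eta k)%R.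
Proof. exact: (lfunE triple_sum). Qed.

Variable r : rep V.

Lemma memv_Rsp eta : (eta \in Rsp r) = [forall k, eta k \in repY r k].
Proof.
rewrite memvE; apply/subv_bigcapP/forallP => [sub k | inY k _].
  by have := sub k isT; rewrite -memvE -memv_preim coordfE.
by rewrite -memvE -memv_preim coordfE.
Qed.

Lemma memv_X10 eta : (eta \in X10 r) =
  [forall k, eta k \in repY r k] && ((\sum_(k < 3) eta k)%R == 0%R).
Proof. by rewrite memv_cap memv_Rsp memv_ker sumfE. Qed.

Lemma X10_sub_Rsp : (X10 r <= Rsp r)%VS.
Proof. exact: capvSl. Qed.

Lemma memv_Gp k eta : (eta \in Gp r k) = (eta \in Rsp r) && (eta k \in repX r k).
Proof. by rewrite memv_cap -memv_preim coordfE. Qed.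

Lemma memv_Hp k eta : (eta \in Hp r k) = (eta \in Rsp r) && (eta k == 0%R).
Proof. by rewrite memv_cap memv_ker coordfE. Qed.

End Coordinates.

Section Decomposes.
Variables (K : fieldType) (W : vectType K).
Implicit Types (A B P Q : {vspace W}).

Definition decomposes A B P := (P <= P :&: A + P :&: B)%VS.

Lemma decomposesE A B P : decomposes A B P -> P = (P :&: A + P :&: B)%VS.
Proof. by move=> dP; apply/eqP; rewrite eqEsubv subv_add !capvSl !andbT. Qed.

Lemma decomposes_subl A B P : (P <= A)%VS -> decomposes A B P.
Proof. by move=> PA; rewrite /decomposes (capv_idPl PA) addvSl. Qed.

Lemma decomposes_subr A B P : (P <= B)%VS -> decomposes A B P.
Proof. by move=> PB; rewrite /decomposes (capv_idPl PB) addvSr. Qed.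

Lemma decomposesS A B A' B' P : (A <= A')%VS -> (B <= B')%VS ->
  decomposes A B P -> decomposes A' B' P.
Proof.
move=> AA' BB' /subv_trans; apply; apply: addvS; exact: capvS.
Qed.

Lemma decomposes_add A B P Q :
  decomposes A B P -> decomposes A B Q -> decomposes A B (P + Q).
Proof.
move=> dP dQ; apply: subv_trans (addvS dP dQ) _.
have capS X : (P :&: X + Q :&: X <= (P + Q) :&: X)%VS.
  by rewrite subv_add !capvS ?addvSl ?addvSr.
by rewrite (Monoid.mulmACA addv) addvS ?capS.
Qed.

Lemma decomposes_cap A B P Q : (A :&: B = 0)%VS ->
  decomposes A B P -> decomposes A B Q -> decomposes A B (P :&: Q).
Proof.
move=> AB0 /subvP dP /subvP dQ; apply/subvP => v /memv_capP[vP vQ].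
have /memv_addP[p1 /memv_capP[p1P p1A] [p2 /memv_capP[p2P p2B] def_v]] := dP v vP.
have /memv_addP[q1 /memv_capP[q1Q q1A] [q2 /memv_capP[q2Q q2B] def_v']] := dQ v vQ.
have /directv_add_unique uniqAB : directv (A + B) by apply/directv_addP.
have /eqP[e1 e2] : (p1, p2) == (q1, q2) by rewrite -uniqAB // -def_v -def_v'.
rewrite def_v; apply: memv_add;
  by rewrite !memv_cap ?p1P ?p1A ?p2P ?p2B ?e1 ?e2 ?q1Q ?q2Q.
Qed.

Lemma decomposes_evalD A B top gx gy a : (A :&: B = 0)%VS ->
  decomposes A B top -> (forall k, decomposes A B (gx k)) ->
  (forall k, decomposes A B (gy k)) -> decomposes A B (evalD top gx gy a).
Proof.
move=> AB0 dtop dx dy.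
by elim: a => //= a IHa b IHb; [exact: decomposes_cap | exact: decomposes_add].
Qed.

End Decomposes.

Lemma decomposes_img (K : fieldType) (W W' : vectType K) (f : 'Hom(W, W'))
    (A B P : {vspace W}) :
  decomposes A B P -> decomposes (f @: A) (f @: B) (f @: P).
Proof.
move=> /(limgS f); rewrite limgD => /subv_trans; apply.
by apply: addvS; apply: limg_cap.
Qed.

Lemma split_off_subspace (K : fieldType) (V : vectType K) (C Y W : {vspace V}) :
    (C <= Y)%VS -> (C :&: W = 0)%VS ->
  exists B, [/\ (W <= B)%VS, (C :&: B = 0)%VS, (C + B = fullv)%VS
              & decomposes C B Y].
Proof.
(* B is W plus a complement F of Y :&: (C + W) in Y, completed by a complement
   of the direct sum C + W + F. *)
move=> CY CW0; set F := (Y :\: (C + W))%VS.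
exists (W + F + (C + W + F)^C)%VS.
have dxC : directv (C + (W + F + (C + W + F)^C)).
  have /directvP/= dx : directv (C + W + F + (C + W + F)^C).
    rewrite !directv_addE /= !directv_trivial CW0 capvC capv_diff.
    by rewrite capv_compl !eqxx.
  by apply/directvP; rewrite /= !addvA dx !addnA.
have FY : (F <= Y)%VS by apply: diffvSl.
split.
- by rewrite -addvA addvSl.
- by move: dxC; rewrite directv_addE => /and3P[_ _ /eqP].
- by rewrite !addvA addv_complf.
rewrite /decomposes (capv_idPr CY).
rewrite -{1}(addv_diff_cap Y (C + W)) -/F capvC -vspace_modl //.
rewrite addvA (addvC F) -addvA addvS // subv_cap subv_add FY capvSr /=.
have WF_B : (W + F <= W + F + (C + W + F)^C)%VS by apply: addvSl.
rewrite subv_add !(subv_trans _ WF_B) ?addvSr //.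
by rewrite (subv_trans (capvSl W Y)) ?addvSl.
Qed.

Lemma ord3_third (i j k m : 'I_3) : i != j -> k != i -> k != j -> m != k ->
  (m == i) || (m == j).
Proof.
by case: i => [[|[|[|?]]] ?] //; case: j => [[|[|[|?]]] ?] //;
   case: k => [[|[|[|?]]] ?] //; case: m => [[|[|[|?]]] ?].
Qed.

Section Indecomposable.
Variables (K : fieldType) (V : vectType K) (r : rep V).
Local Notation X := (repX r).
Local Notation Y := (repY r).

Lemma indecomposable_split (C B : {vspace V}) : indecomposable r ->
    (C :&: B = 0)%VS -> (C + B = fullv)%VS ->
    (forall k, decomposes C B (X k)) -> (forall k, decomposes C B (Y k)) ->
  C = 0%VS \/ B = 0%VS.
Proof.
move=> [_ r_indec] CB0 CBfull dX dY.
have [-> | C_neq0] := eqVneq C 0%VS; first by left.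
have [-> | B_neq0] := eqVneq B 0%VS; first by right.
exfalso; apply: r_indec; exists C, B; split => // a.
apply/decomposesE/decomposes_evalD => //.
by rewrite /decomposes !capfv CBfull.
Qed.

Definition Yrest k := (\sum_(m | m != k) Y m)%VS.

Lemma Y_sub_Yrest k m : m != k -> (Y m <= Yrest k)%VS.
Proof. by move=> mk; apply: (sumv_sup m). Qed.

Lemma Yrest_neq0 k : X10 r != 0%VS -> Yrest k != 0%VS.
Proof.
move=> X10_neq0; apply: contraNneq X10_neq0 => Yrest0.
rewrite -subv0; apply/subvP => eta.
rewrite memv_X10 memv0 => /andP[/forallP etaY /eqP eta_sum0].
have eta_other m : m != k -> eta m = 0%R.
  by move=> mk; apply/eqP; rewrite -memv0 -Yrest0 (subvP (Y_sub_Yrest mk)).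
have eta_k : eta k = 0%R by rewrite (bigD1 k) //= big1 ?addr0 in eta_sum0.
by apply/eqP/ffunP => m; rewrite ffunE; have [->|/eta_other] := eqVneq m k.
Qed.

Lemma lift_to_X10 k y : y \in Y k -> y \in Yrest k ->
  exists2 eta, eta \in X10 r & eta k = y.
Proof.
move=> yY /memv_sumP[ys ysY def_y].
exists [ffun m => if m == k then y else - ys m]; last by rewrite ffunE eqxx.
rewrite memv_X10; apply/andP; split.
  by apply/forallP => m; rewrite ffunE; case: eqP => [-> | /eqP/ysY]; rewrite ?memvN.
rewrite (bigD1 k) //= ffunE eqxx (eq_bigr (fun m => - ys m)).
  by rewrite sumrN -def_y subrr.
by move=> m /negbTE mk; rewrite ffunE mk.
Qed.

Lemma phi_X10_sub k : (phi k (X10 r) <= Y k)%VS.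
Proof.
apply/subvP => _ /memv_imgP[eta + ->].
by rewrite memv_X10 coordfE => /andP[/forallP].
Qed.

Section NonzeroX10.
Hypotheses (r_indec : indecomposable r) (X10_neq0 : X10 r != 0%VS).

Lemma Y_sub_own_Yrest k : (Y k <= Yrest k)%VS.
Proof.
apply/negPn/negP => Y_not_sub; set W := Yrest k.
(* C is taken inside X_k whenever X_k is not contained in W, so that X_k
   splits along C (+) W as well. *)
have [C [CY CW0 C_neq0 dXk]] : exists C,
    [/\ (C <= Y k)%VS, (C :&: W = 0)%VS, C != 0%VS & decomposes C W (X k)].
  have [XW | X_not_sub] := boolP (X k <= W)%VS.
    exists (Y k :\: W)%VS; split; rewrite ?diffvSl ?capv_diff ?diffv_eq0 //.
    exact: decomposes_subr.
  exists (X k :\: W)%VS; split; rewrite ?capv_diff ?diffv_eq0 //.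
    exact: subv_trans (diffvSl _ _) (repXY r k).
  by rewrite /decomposes (capv_idPr (diffvSl _ _)) addv_diff_cap.
have [B [WB CB0 CBfull dYk]] := split_off_subspace CY CW0.
have dX m : decomposes C B (X m).
  have [-> | mk] := eqVneq m k; first exact: decomposesS dXk.
  by apply/decomposes_subr/(subv_trans (repXY r m))/(subv_trans _ WB)/Y_sub_Yrest.
have dY m : decomposes C B (Y m).
  have [-> // | mk] := eqVneq m k.
  by apply/decomposes_subr/(subv_trans _ WB)/Y_sub_Yrest.
have [C0 | B0] := indecomposable_split r_indec CB0 CBfull dX dY.
  by rewrite C0 eqxx in C_neq0.
by move: (Yrest_neq0 k X10_neq0); rewrite -subv0 -B0 WB.
Qed.

Lemma sumY_full : (\sum_(k < 3) Y k = fullv)%VS.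
Proof.
set S := (\sum_(k < 3) Y k)%VS.
have YS k : (Y k <= S)%VS by apply: (sumv_sup k).
have dX k : decomposes S S^C (X k).
  exact/decomposes_subl/(subv_trans (repXY r k))/YS.
have dY k : decomposes S S^C (Y k) by apply/decomposes_subl/YS.
have [S0 | S'0] := indecomposable_split r_indec (capv_compl S) (addv_complf S) dX dY.
  have : (Yrest ord0 <= S)%VS by apply/subv_sumP => m _; apply: YS.
  by rewrite S0 subv0 (negbTE (Yrest_neq0 ord0 X10_neq0)).
by rewrite -(addv_complf S) S'0 addv0.
Qed.

Lemma phi_X10 k : phi k (X10 r) = Y k.
Proof.
apply/eqP; rewrite eqEsubv phi_X10_sub; apply/subvP => y yY.
have [eta eta_X10 <-] := lift_to_X10 yY (subvP (Y_sub_own_Yrest k) y yY).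
by rewrite -coordfE memv_img.
Qed.

Lemma phi_Gp k : phi k (Gp r k :&: X10 r) = X k.
Proof.
apply/eqP; rewrite eqEsubv; apply/andP; split.
  apply/subvP => _ /memv_imgP[eta /memv_capP[+ _] ->].
  by rewrite memv_Gp coordfE => /andP[].
apply/subvP => x xX; have xY := subvP (repXY r k) x xX.
have [eta eta_X10 eta_k] := lift_to_X10 xY (subvP (Y_sub_own_Yrest k) x xY).
rewrite -eta_k -coordfE memv_img // memv_cap eta_X10 memv_Gp eta_k xX.
by rewrite (subvP (X10_sub_Rsp r)).
Qed.

Lemma Y_add_full i j : i != j -> (Y i + Y j = fullv)%VS.
Proof.
move=> ij; apply/eqP; rewrite eqEsubv subvf -sumY_full; apply/subv_sumP => k _.
have [-> | ki] := eqVneq k i; first exact: addvSl.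
have [-> | kj] := eqVneq k j; first exact: addvSr.
apply: subv_trans (Y_sub_own_Yrest k) _; apply/subv_sumP => m mk.
by case/orP: (ord3_third ij ki kj mk) => /eqP->; [apply: addvSl | apply: addvSr].
Qed.

End NonzeroX10.
End Indecomposable.

Lemma phi_eq0 (K : fieldType) (V : vectType K) (U : {vspace triple V}) :
  (forall k, phi k U = 0%VS) -> U = 0%VS.
Proof.
move=> phiU0; apply/eqP; rewrite -subv0; apply/subvP => eta etaU.
rewrite memv0; apply/eqP/ffunP => k; rewrite ffunE; apply/eqP.
by rewrite -memv0 -(phiU0 k) -coordfE memv_img.
Qed.

Section PushForward.
Variables (K : fieldType) (V : vectType K) (r : rep V).
Variables (A' B' : {vspace triple V}).
Hypotheses (r_indec : indecomposable r) (X10_neq0 : X10 r != 0%VS).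
Hypotheses (AB'0 : (A' :&: B' = 0)%VS) (AB'_X10 : (A' + B' = X10 r)%VS).
Hypothesis dHp : forall k, decomposes A' B' (Hp r k :&: X10 r).
Hypothesis dGp : forall k, decomposes A' B' (Gp r k :&: X10 r).

Local Notation sum_phi U := (\sum_(k < 3) phi k U)%VS.

Let A'_X10 : (A' <= X10 r)%VS. Proof. by rewrite -AB'_X10 addvSl. Qed.
Let B'_X10 : (B' <= X10 r)%VS. Proof. by rewrite -AB'_X10 addvSr. Qed.

Lemma phi_cap_eq0 k : (phi k A' :&: phi k B' = 0)%VS.
Proof.
(* If a in A' and b in B' agree at k, then a - b lies in H'_k; splitting it
   along A' (+) B' recovers a, which therefore vanishes at k. *)
move/directv_addP/directv_add_unique: AB'0 => uniqAB'.
apply/eqP; rewrite -subv0; apply/subvP => _ /memv_capP[/memv_imgP[a aA ->]].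
move=> /memv_imgP[b bB]; rewrite !coordfE memv0 => ab_k.
have abX10 : a - b \in X10 r by rewrite -AB'_X10 memv_add ?memvN.
have abHp : a - b \in (Hp r k :&: X10 r)%VS.
  rewrite memv_cap memv_Hp abX10 (subvP (X10_sub_Rsp r)) //.
  by rewrite !ffunE ab_k subrr eqxx.
have /memv_addP[h1 /memv_capP[h1H h1A] [h2 /memv_capP[_ h2B] def_ab]] :=
  subvP (dHp k) _ abHp.
have /eqP[a_h1 _] : (a, - b) == (h1, h2) by rewrite -uniqAB' ?memvN // -def_ab.
by move: h1H; rewrite -a_h1 memv_cap memv_Hp => /andP[/andP[]].
Qed.

Lemma sum_phi_cap_eq0 : (sum_phi A' :&: sum_phi B' = 0)%VS.
Proof.
have phiY U k : (U <= X10 r)%VS -> (phi k U <= repY r k)%VS.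
  by move=> UX10; apply: subv_trans (limgS _ UX10) (phi_X10_sub r k).
apply/eqP; rewrite -subv0; apply/subvP => v /memv_capP[].
move=> /memv_sumP[a a_phi ->] /memv_sumP[b b_phi def_v].
have abX10 : [ffun k => a k - b k] \in X10 r.
  rewrite memv_X10; apply/andP; split.
    apply/forallP => k; rewrite ffunE memvB //.
      exact: (subvP (phiY _ k A'_X10)) (a_phi k isT).
    exact: (subvP (phiY _ k B'_X10)) (b_phi k isT).
  rewrite (eq_bigr (fun k => a k - b k)) ?sumrB ?def_v ?subrr ?eqxx // => k _.
  by rewrite ffunE.
have /memv_addP[al alA [be beB def_ab]] : [ffun k => a k - b k] \in (A' + B')%VS.
  by rewrite AB'_X10.
have a_al k : a k = al k.
  move/directv_addP/directv_add_unique: (phi_cap_eq0 k) => uniq_phi.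
  have al_phi : al k \in phi k A' by rewrite -coordfE memv_img.
  have be_phi : be k \in phi k B' by rewrite -coordfE memv_img.
  have /eqP[] // : (a k, - b k) == (al k, be k).
  rewrite -uniq_phi ?memvN ?a_phi ?b_phi //.
  by have := congr1 (fun eta : triple V => eta k) def_ab; rewrite !ffunE => ->.
have : al \in X10 r by apply: (subvP A'_X10).
by rewrite memv_X10 memv0 (eq_bigr _ (fun k _ => a_al k)) => /andP[].
Qed.

Lemma Y_eq_phi_add k : repY r k = (phi k A' + phi k B')%VS.
Proof. by rewrite -phi_X10 // -AB'_X10 /phi limgD. Qed.

Lemma sum_phi_add_full : (sum_phi A' + sum_phi B' = fullv)%VS.
Proof.
apply/eqP; rewrite eqEsubv subvf -(sumY_full r_indec X10_neq0).
by apply/subv_sumP => k _; rewrite Y_eq_phi_add addvS // (sumv_sup k).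
Qed.

Lemma decomposes_sum_phi_X k : decomposes (sum_phi A') (sum_phi B') (repX r k).
Proof.
rewrite -phi_Gp //; apply: decomposesS (decomposes_img _ (dGp k));
  exact: (sumv_sup k).
Qed.

Lemma decomposes_sum_phi_Y k : decomposes (sum_phi A') (sum_phi B') (repY r k).
Proof.
have dX10 : decomposes A' B' (X10 r).
  by rewrite /decomposes (capv_idPr A'_X10) (capv_idPr B'_X10) AB'_X10.
rewrite -phi_X10 //; apply: decomposesS (decomposes_img _ dX10);
  exact: (sumv_sup k).
Qed.

Lemma PhiPlus_split_trivial : A' = 0%VS \/ B' = 0%VS.
Proof.
have [A0 | B0] := indecomposable_split r_indec sum_phi_cap_eq0 sum_phi_add_full
  decomposes_sum_phi_X decomposes_sum_phi_Y; [left | right];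
  apply: phi_eq0 => k; apply/eqP; rewrite -subv0; [rewrite -A0 | rewrite -B0];
  exact: (sumv_sup k).
Qed.

End PushForward.

(* Phi^+ rho as a representation in its own space X^1_0, transported along
   the inclusion of X^1_0 into the triples. *)
Section PhiPlusRep.
Variables (K : fieldType) (V : vectType K) (r : rep V).

Definition X10_incl : 'Hom(subvs_of (X10 r), triple V) := linfun vsval.

Lemma X10_incl_ker0 : lker X10_incl == 0%VS.
Proof. by apply/lker0P => x y; rewrite !lfunE; apply: subvs_inj. Qed.

Lemma limg_X10_incl : limg X10_incl = X10 r.
Proof.
apply/eqP; rewrite eqEsubv; apply/andP; split.
  by apply/subvP => _ /memv_imgP[u _ ->]; rewrite lfunE subvsP.
apply/subvP => eta etaX10; rewrite -(vsprojK etaX10) -[vsval _](lfunE (vsval)).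
exact: memv_img (memvf _).
Qed.

Lemma Hp_sub_Gp k : (Hp r k <= Gp r k)%VS.
Proof.
apply/subvP => eta; rewrite memv_Hp memv_Gp => /andP[-> /eqP->].
exact: mem0v.
Qed.

Lemma PhiPlusRep_subproof k :
  (X10_incl @^-1: (Hp r k :&: X10 r) <= X10_incl @^-1: (Gp r k :&: X10 r))%VS.
Proof. exact/lpreimS/capvS/subvv/Hp_sub_Gp. Qed.

Definition PhiPlusRep : rep (subvs_of (X10 r)) := Rep PhiPlusRep_subproof.

Lemma limg_rho_PhiPlusRep a : (X10_incl @: rho PhiPlusRep a)%VS = PhiPlus r a.
Proof.
elim: a => [k | k | | a IHa b IHb | a IHa b IHb] /=.
- by rewrite lpreimK // limg_X10_incl capvSr.
- by rewrite lpreimK // limg_X10_incl capvSr.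
- exact: limg_X10_incl.
- move: IHa IHb; rewrite /PhiPlus /rho /= => <- <-.
  by rewrite lker0_img_cap ?X10_incl_ker0.
- by move: IHa IHb; rewrite /PhiPlus /rho /= => <- <-; rewrite limgD.
Qed.

Lemma PhiPlus_sub_X10 a : (PhiPlus r a <= X10 r)%VS.
Proof.
rewrite -limg_rho_PhiPlusRep -[X in (_ <= X)%VS]limg_X10_incl.
exact/limgS/subvf.
Qed.

Lemma PhiPlusRep_indecomposable :
  indecomposable r -> X10 r != 0%VS -> indecomposable PhiPlusRep.
Proof.
move=> r_indec X10_neq0; split.
  apply: contraNneq X10_neq0 => /eqP; rewrite -subv0 => /(limgS X10_incl).
  by rewrite limg0 limg_X10_incl subv0.
case=> [A1 [A2 [A1_neq0 A2_neq0 A12_0 A12_full dA]]].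
have dPhiPlus a : decomposes (X10_incl @: A1) (X10_incl @: A2) (PhiPlus r a).
  by rewrite -limg_rho_PhiPlusRep; apply/decomposes_img; rewrite /decomposes -dA.
have inj_cap0 : (X10_incl @: A1 :&: X10_incl @: A2 = 0)%VS.
  by rewrite -lker0_img_cap ?X10_incl_ker0 // A12_0 limg0.
have inj_sum : (X10_incl @: A1 + X10_incl @: A2 = X10 r)%VS.
  by rewrite -limgD A12_full limg_X10_incl.
have [A1_0 | A2_0] := PhiPlus_split_trivial r_indec X10_neq0 inj_cap0 inj_sum
  (fun k => dPhiPlus (Dx k)) (fun k => dPhiPlus (Dy k)).
  by move: A1_neq0; rewrite -(eq_limg_ker0 _ _ X10_incl_ker0) A1_0 limg0 eqxx.
by move: A2_neq0; rewrite -(eq_limg_ker0 _ _ X10_incl_ker0) A2_0 limg0 eqxx.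
Qed.

Lemma PhiPlus_perfect z : perfect K z -> indecomposable r -> X10 r != 0%VS ->
  PhiPlus r z = 0%VS \/ PhiPlus r z = X10 r.
Proof.
move=> z_perfect r_indec X10_neq0.
have [rho0 | rho_full] := z_perfect _ _ (PhiPlusRep_indecomposable r_indec X10_neq0).
  by left; rewrite -limg_rho_PhiPlusRep rho0 limg0.
by right; rewrite -limg_rho_PhiPlusRep rho_full limg_X10_incl.
Qed.

End PhiPlusRep.

Theorem mainTheorem14 (K : fieldType) (z u : D222) (i j : 'I_3) :
  perfect K z -> i != j ->
  (forall (V : vectType K) (r : rep V), indecomposable r ->
     (phi i (PhiPlus r z) + phi j (PhiPlus r z))%VS = rho r u) ->
  perfect K u.
Proof.
move=> z_perfect ij phi_z_eq V r r_indec; rewrite -(phi_z_eq V r r_indec).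
have phi_0 : (phi i 0 + phi j 0 = 0 :> {vspace V})%VS by rewrite /phi !limg0 addv0.
have [X10_0 | X10_neq0] := eqVneq (X10 r) 0%VS.
  have PhiPlus_z0 : PhiPlus r z = 0%VS.
    by apply/eqP; rewrite -subv0 -X10_0 PhiPlus_sub_X10.
  by left; rewrite PhiPlus_z0.
have [-> | ->] := PhiPlus_perfect z_perfect r_indec X10_neq0; first by left.
by right; rewrite !phi_X10 // Y_add_full.
Qed.
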